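(* Let $L\in\{0,1\}$, $X$ and $A$ be jointly distributed discrete random variables with finite supports, such that conditioned on $L=0$ the message $A$ is independent of $X$, i.e. $\Pr(A=a\mid X=x,L=0)=\Pr(A=a\mid L=0)$ for all $a$ and all $x$ with $\Pr(X=x,L=0)>0$. Assume $\Pr(L=0\mid X=x)>0$ for all $x$ in the support of $X$. Then \[ I(X;A)\le \mathrm{susp}(X,A)-\mathrm{susp}(X) \] (where the right-hand side may be $+\infty$). If moreover $\Pr(L=0\mid X=x,A=a)>0$ whenever $\Pr(X=x,A=a)>0$, then equality holds if and only if $A$ has the same distribution as $A$ conditioned on $L=0$, i.e. $\Pr(A=a)=\Pr(A=a\mid L=0)$ for all $a$.
   Context: All logarithms are base $2$. For a random variable $Y$ (possibly a tuple of random variables) jointly distributed with $L\in\{0,1\}$ and a value $y$ with $\Pr(Y=y)>0$, the suspicion given $Y=y$ is $\mathrm{susp}(Y=y)=-\log\Pr(L=0\mid Y=y)\in[0,\infty]$, and the suspicion given $Y$ is $\mathrm{susp}(Y)=\sum_{y}\Pr(Y=y)\,\mathrm{susp}(Y=y)$. Thus $\mathrm{susp}(X,A)$ is the suspicion given the pair $(X,A)$. $I(\cdot;\cdot)$ is Shannon mutual information. (Interpretation: $L=1$ means ''Alice knows the secret $X$''; when $L=0$ she picks her message $A$ without regard to $X$.) *)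

From mathcomp Require Import all_boot.
From Stdlib Require Import Reals.
Set Implicit Arguments. Unset Strict Implicit. Unset Printing Implicit Defensive.

Open Scope R_scope.

Definition Rsum (T : finType) (f : T -> R) : R := \big[Rplus/0]_(t : T) f t.

Definition log2 (r : R) : R := ln r / ln 2.

Inductive ereal := Fin of R | PInf.

Definition eadd (x y : ereal) : ereal :=
  match x, y with
  | Fin a, Fin b => Fin (a + b)
  | _, _ => PInf
  end.

Definition ele (x y : ereal) : Prop :=
  match x, y with
  | Fin a, Fin b => a <= b
  | _, PInf => True
  | PInf, Fin _ => False
  end.

(* Subtraction x - y; only meaningful when y is finite
   (PInf - finite = PInf). The case y = PInf is a junk value (never used:
   in the theorem susp(X) is finite under the hypotheses). *)
Definition esub (x y : ereal) : ereal :=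
  match x, y with
  | Fin a, Fin b => Fin (a - b)
  | PInf, Fin _ => PInf
  | _, PInf => Fin 0
  end.

(* Generic suspicion of a random variable Y with values in a finite type T:
   q y = Pr(Y = y), q0 y = Pr(L = 0, Y = y).
   susp(Y=y) = - log Pr(L=0 | Y=y) (= +infinity when that probability is 0),
   susp(Y) = sum over y with Pr(Y=y) > 0 of Pr(Y=y) * susp(Y=y). *)
Definition susp_term (T : finType) (q0 q : T -> R) (y : T) : ereal :=
  if Rlt_dec 0 (q y) then
    if Req_EM_T (q0 y / q y) 0 then PInf
    else Fin (q y * - log2 (q0 y / q y))
  else Fin 0.

Definition susp (T : finType) (q0 q : T -> R) : ereal :=
  \big[eadd/Fin 0]_(y : T) susp_term q0 q y.

(* A joint distribution of (L, X, A): P l x a = Pr(L = l, X = x, A = a),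
   where L = 0 is encoded by [false] and L = 1 by [true]. *)
Section Joint.
Variables (X A : finType) (P : bool -> X -> A -> R).

Definition pXA (x : X) (a : A) : R := Rsum (fun l : bool => P l x a).
Definition pX (x : X) : R := Rsum (fun a : A => pXA x a).
Definition pA (a : A) : R := Rsum (fun x : X => pXA x a).
Definition pXA0 (x : X) (a : A) : R := P false x a.
Definition pX0 (x : X) : R := Rsum (fun a : A => P false x a).
Definition pA0 (a : A) : R := Rsum (fun x : X => P false x a).
Definition pL0 : R := Rsum (fun x : X => pX0 x).

Definition suspXA : ereal :=
  susp (fun xa : X * A => pXA0 xa.1 xa.2) (fun xa : X * A => pXA xa.1 xa.2).
Definition suspX : ereal := susp pX0 pX.

Definition mutinfo : R :=
  Rsum (fun xa : X * A =>
    if Rlt_dec 0 (pXA xa.1 xa.2)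
    then pXA xa.1 xa.2 * log2 (pXA xa.1 xa.2 / (pX xa.1 * pA xa.2))
    else 0).
End Joint.

From HB Require Import structures.
From mathcomp Require Import all_boot.
From Stdlib Require Import Reals Lra Classical.
Set Implicit Arguments. Unset Strict Implicit. Unset Printing Implicit Defensive.
Open Scope R_scope.

(* Write p(x,a) = Pr(X=x, A=a) and q(a) = Pr(A=a | L=0).  Independence of A
   and X given L = 0 says Pr(L=0, X=x, A=a) = Pr(L=0, X=x) q(a).  When
   Pr(L=0 | X=x, A=a) > 0 on the support of p, taking -log2 of
   Pr(L=0 | x, a) = Pr(L=0 | x) * (p(x) p(a) / p(x,a)) * (q(a) / p(a))
   and averaging over p gives the chain rule
       susp(X,A) - susp(X) = I(X;A) + D(p_A || q),
   D being the Kullback-Leibler divergence.  Gibbs' inequality D >= 0, with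
   equality iff p_A = q, then yields both claims.  Otherwise susp(X,A) = +oo
   while susp(X) is finite, and the inequality is trivial. *)

Lemma RplusA : associative Rplus.
Proof. by move=> x y z; rewrite Rplus_assoc. Qed.
HB.instance Definition _ :=
  Monoid.isComLaw.Build R 0 Rplus RplusA Rplus_comm Rplus_0_l.

Lemma eaddA : associative eadd.
Proof. by case=> [a|] [b|] [c|] //=; rewrite Rplus_assoc. Qed.
Lemma eaddC : commutative eadd.
Proof. by case=> [a|] [b|] //=; rewrite Rplus_comm. Qed.
Lemma eadd0 : left_id (Fin 0) eadd.
Proof. by case=> [a|] //=; rewrite Rplus_0_l. Qed.
HB.instance Definition _ :=
  Monoid.isComLaw.Build ereal (Fin 0) eadd eaddA eaddC eadd0.

Section FiniteSums.
Variable T : finType.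
Implicit Types f g : T -> R.

Lemma Rsum_ext f g : (forall t, f t = g t) -> Rsum f = Rsum g.
Proof. by move=> fg; apply: eq_bigr => t _. Qed.

Lemma Rsum_add f g : Rsum (fun t => f t + g t) = Rsum f + Rsum g.
Proof. exact: big_split. Qed.

Lemma Rsum_scalr c f : Rsum (fun t => f t * c) = Rsum f * c.
Proof.
rewrite /Rsum; symmetry; apply: (big_morph (fun y => y * c)).
- by move=> x y; rewrite Rmult_plus_distr_r.
- by rewrite Rmult_0_l.
Qed.

Lemma Rsum_le f g : (forall t, f t <= g t) -> Rsum f <= Rsum g.
Proof.
move=> fg; apply: (big_ind2 (fun x y => x <= y)) => // [|x1 x2 y1 y2]; lra.
Qed.

Lemma Rsum_ge0 f : (forall t, 0 <= f t) -> 0 <= Rsum f.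
Proof. by move=> f_ge0; apply: (big_ind (fun x => 0 <= x)) => // [|x y]; lra. Qed.

Lemma Rsum_ge_term f t : (forall t, 0 <= f t) -> f t <= Rsum f.
Proof.
move=> f_ge0; rewrite /Rsum (bigD1 t) //=.
have : 0 <= \big[Rplus/0]_(i | i != t) f i.
  by apply: (big_ind (fun x => 0 <= x)) => //; [lra | move=> x y; lra].
lra.
Qed.

Lemma Rsum_pos_term f : (forall t, 0 <= f t) -> 0 < Rsum f -> exists t, 0 < f t.
Proof.
move=> f_ge0 sum_pos; apply: NNPP => no_pos; move: sum_pos.
rewrite /Rsum big1 => [|t _]; first lra.
by have := f_ge0 t; apply: NNPP => ft; apply: no_pos; exists t; lra.
Qed.

Lemma Rsum_le_eq f g :
  (forall t, f t <= g t) -> Rsum f = Rsum g -> forall t, f t = g t.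
Proof.
move=> fg sum_eq t; move: sum_eq.
rewrite /Rsum [X in X = _](bigD1 t) // [X in _ = X](bigD1 t) //=.
have : \big[Rplus/0]_(i | i != t) f i <= \big[Rplus/0]_(i | i != t) g i.
  by apply: (big_ind2 (fun x y => x <= y)) => // [|x1 x2 y1 y2]; lra.
by have := fg t; lra.
Qed.

Lemma esum_fin f : \big[eadd/Fin 0]_(t : T) Fin (f t) = Fin (Rsum f).
Proof. by rewrite /Rsum; symmetry; apply: (big_morph Fin). Qed.

Lemma esum_inf (h : T -> ereal) t :
  h t = PInf -> \big[eadd/Fin 0]_(t : T) h t = PInf.
Proof. by move=> ht; rewrite (bigD1 t) //= ht; case: (\big[_/_]_(i | _) _). Qed.
End FiniteSums.

Lemma Rsum_bool (f : bool -> R) : Rsum f = f true + f false.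
Proof. exact: big_bool. Qed.

Lemma Rsum_pair (X A : finType) (f : X -> A -> R) :
  Rsum (fun xa : X * A => f xa.1 xa.2) = Rsum (fun x => Rsum (fun a => f x a)).
Proof. by rewrite /Rsum pair_bigA. Qed.

Lemma Rsum_exch (X A : finType) (f : X -> A -> R) :
  Rsum (fun x => Rsum (fun a => f x a)) = Rsum (fun a => Rsum (fun x => f x a)).
Proof. exact: exchange_big. Qed.

Lemma ln2_pos : 0 < ln 2.
Proof. by have := ln_lt_2; lra. Qed.

Lemma log2_1 : log2 1 = 0.
Proof. by rewrite /log2 ln_1 /Rdiv Rmult_0_l. Qed.

Lemma log2_mul x y : 0 < x -> 0 < y -> log2 (x * y) = log2 x + log2 y.
Proof. by move=> x_pos y_pos; rewrite /log2 ln_mult // /Rdiv Rmult_plus_distr_r. Qed.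

Lemma log2_div x y : 0 < x -> 0 < y -> log2 (x / y) = log2 x - log2 y.
Proof.
move=> x_pos y_pos; rewrite /Rdiv log2_mul //; last exact: Rinv_0_lt_compat.
by rewrite /log2 ln_Rinv //; field; have := ln2_pos; lra.
Qed.

Lemma ln_le_sub1 u : 0 < u -> ln u <= u - 1.
Proof. by move=> u_pos; have := exp_ineq1_le (ln u); rewrite exp_ln //; lra. Qed.

Lemma ln_eq_sub1 u : 0 < u -> ln u = u - 1 -> u = 1.
Proof.
move=> u_pos ln_eq; case: (Req_dec (ln u) 0) => [ln0|ln_neq0].
  by rewrite -(exp_ln u u_pos) ln0 exp_0.
by have := exp_ineq1 _ ln_neq0; rewrite exp_ln //; lra.
Qed.

(* Pointwise Gibbs inequality: p log2 (p/q) >= (p - q) / ln 2, with equality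
   only when p = q.  Summed over a support, the right-hand sides cancel. *)
Lemma gibbs_term p q : 0 <= p -> 0 <= q -> (0 < p -> 0 < q) ->
  (p - q) / ln 2 <= p * log2 (p / q) /\
  ((p - q) / ln 2 = p * log2 (p / q) -> p = q).
Proof.
move=> p_ge0 q_ge0 supp; have ln2 := ln2_pos.
case: (Req_dec p 0) => [p0|p_neq0].
  have term0 : (p - q) / ln 2 = - (q / ln 2) by rewrite p0 /Rdiv; ring.
  have q_div_ge0 : 0 <= q / ln 2.
    by apply: Rmult_le_pos => //; apply/Rlt_le/Rinv_0_lt_compat.
  rewrite term0 p0 Rmult_0_l; split; first lra.
  move=> eq0; have -> : q = q / ln 2 * ln 2 by field; lra.
  by rewrite (_ : q / ln 2 = 0) ?Rmult_0_l //; lra.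
have p_pos : 0 < p by lra.
have q_pos := supp p_pos.
set u := q / p; have u_pos : 0 < u by apply: Rdiv_lt_0_compat.
have gap : p * log2 (p / q) - (p - q) / ln 2 = p * (u - 1 - ln u) / ln 2.
  have -> : p / q = / u by rewrite /u; field; lra.
  by rewrite /log2 ln_Rinv // /u; field; lra.
have ln_le := ln_le_sub1 u_pos; have ln_eq := ln_eq_sub1 u_pos.
split.
  suff : 0 <= p * (u - 1 - ln u) / ln 2 by lra.
  apply: Rmult_le_pos; last by apply/Rlt_le/Rinv_0_lt_compat.
  by apply: Rmult_le_pos; lra.
move=> eq_case; have gap0 : p * (u - 1 - ln u) / ln 2 = 0 by lra.
move: gap0; rewrite /Rdiv; case/Rmult_integral => [/Rmult_integral [|ln_gap] | inv0].
- lra.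
- have u1 : u = 1 by apply: ln_eq; lra.
  have -> : q = u * p by rewrite /u; field; lra.
  by rewrite u1 Rmult_1_l.
- by have := Rinv_neq_0_compat _ (Rgt_not_eq _ _ ln2).
Qed.

Definition divergence (T : finType) (p q : T -> R) : R :=
  Rsum (fun t => p t * log2 (p t / q t)).

Section Gibbs.
Variables (T : finType) (p q : T -> R).
Hypotheses (p_ge0 : forall t, 0 <= p t) (q_ge0 : forall t, 0 <= q t).
Hypothesis same_mass : Rsum p = Rsum q.
Hypothesis supp : forall t, 0 < p t -> 0 < q t.

Lemma gibbs_lower_sum : Rsum (fun t => (p t - q t) / ln 2) = 0.
Proof.
rewrite (Rsum_ext (g := fun t => p t * / ln 2 + q t * - / ln 2)); last first.
  by move=> t; rewrite /Rdiv; ring.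
by rewrite Rsum_add !Rsum_scalr same_mass; ring.
Qed.

Lemma divergence_ge0 : 0 <= divergence p q.
Proof.
rewrite -gibbs_lower_sum; apply: Rsum_le => t.
by case: (gibbs_term (p_ge0 t) (q_ge0 t) (@supp t)).
Qed.

Lemma divergence_eq0 : divergence p q = 0 <-> forall t, p t = q t.
Proof.
split=> [div0 t | pq].
  have bound t' := proj1 (gibbs_term (p_ge0 t') (q_ge0 t') (@supp t')).
  apply: (proj2 (gibbs_term (p_ge0 t) (q_ge0 t) (@supp t))).
  by apply: (Rsum_le_eq bound); rewrite gibbs_lower_sum; symmetry.
rewrite /divergence /Rsum big1 // => t _; rewrite -pq.
case: (Req_dec (p t) 0) => [->|pt_neq0]; first exact: Rmult_0_l.
by rewrite /Rdiv Rinv_r // -/(Rdiv 1 1) log2_1 Rmult_0_r.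
Qed.
End Gibbs.

Section Suspicion.
Variables (T : finType) (q0 q : T -> R).

Lemma susp_fin : (forall y, 0 <= q y) -> (forall y, 0 < q y -> 0 < q0 y) ->
  susp q0 q = Fin (Rsum (fun y => q y * - log2 (q0 y / q y))).
Proof.
move=> q_ge0 supp; rewrite /susp -esum_fin; apply: eq_bigr => y _.
rewrite /susp_term; case: (Rlt_dec 0 (q y)) => [qy_pos | qy_npos].
  case: (Req_EM_T (q0 y / q y) 0) => [ratio0 | //].
  by have := Rdiv_lt_0_compat _ _ (supp y qy_pos) qy_pos; lra.
rewrite /= (_ : q y = 0) ?Rmult_0_l //.
by have := q_ge0 y; lra.
Qed.

Lemma susp_inf y : 0 < q y -> q0 y = 0 -> susp q0 q = PInf.
Proof.
move=> qy_pos q0y; rewrite /susp (@esum_inf _ _ y) // /susp_term.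
case: (Rlt_dec 0 (q y)) => [/= _ | //].
by case: (Req_EM_T (q0 y / q y) 0) => // []; rewrite q0y /Rdiv Rmult_0_l.
Qed.
End Suspicion.

Section JointDistribution.
Variables (X A : finType) (P : bool -> X -> A -> R).
Hypothesis P_ge0 : forall l x a, 0 <= P l x a.
Hypothesis P_total :
  Rsum (fun l : bool => Rsum (fun x : X => Rsum (fun a : A => P l x a))) = 1.
Hypothesis indep0 : forall x a, 0 < pX0 P x ->
  P false x a / pX0 P x = pA0 P a / pL0 P.
Hypothesis condX_pos : forall x, 0 < pX P x -> 0 < pX0 P x / pX P x.

Definition pAcond (a : A) : R := pA0 P a / pL0 P.

Definition full_support : Prop := forall x a, 0 < pXA P x a -> 0 < P false x a.

Lemma pXA_ge0 x a : 0 <= pXA P x a.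
Proof. by rewrite /pXA Rsum_bool; have := P_ge0 true x a; have := P_ge0 false x a; lra. Qed.

Lemma pXA_le_pX x a : pXA P x a <= pX P x.
Proof. exact: (Rsum_ge_term (f := fun a => pXA P x a) a (pXA_ge0 x)). Qed.

Lemma pXA_le_pA x a : pXA P x a <= pA P a.
Proof. exact: (Rsum_ge_term (f := fun x => pXA P x a) x (pXA_ge0^~ a)). Qed.

Lemma P0_le_pA0 x a : P false x a <= pA0 P a.
Proof. exact: (Rsum_ge_term (f := fun x => P false x a) x (P_ge0 false^~ a)). Qed.

Lemma pX_ge0 x : 0 <= pX P x.
Proof. exact: Rsum_ge0 (pXA_ge0 x). Qed.

Lemma pA_ge0 a : 0 <= pA P a.
Proof. exact: Rsum_ge0 (pXA_ge0^~ a). Qed.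

Lemma pX0_ge0 x : 0 <= pX0 P x.
Proof. exact: Rsum_ge0 (P_ge0 false x). Qed.

Lemma pX0_le_pL0 x : pX0 P x <= pL0 P.
Proof. exact: (Rsum_ge_term (f := pX0 P) x pX0_ge0). Qed.

Lemma pX0_pos x : 0 < pX P x -> 0 < pX0 P x.
Proof.
move=> pX_pos; have -> : pX0 P x = pX0 P x / pX P x * pX P x by field; lra.
exact: Rmult_lt_0_compat (condX_pos pX_pos) pX_pos.
Qed.

Lemma pX_total : Rsum (pX P) = 1.
Proof.
rewrite -P_total /pX /pXA (Rsum_exch (fun l x => Rsum (fun a => P l x a))).
by apply: Rsum_ext => x; rewrite Rsum_exch.
Qed.

Lemma pA_total : Rsum (pA P) = 1.
Proof. by rewrite -pX_total /pA /pX (Rsum_exch (fun x a => pXA P x a)). Qed.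

Lemma pL0_pos : 0 < pL0 P.
Proof.
have [x pX_pos] := Rsum_pos_term pX_ge0 ltac:(rewrite pX_total; lra).
by have := pX0_pos pX_pos; have := pX0_le_pL0 x; lra.
Qed.

Lemma pAcond_total : Rsum pAcond = 1.
Proof.
rewrite /pAcond /Rdiv Rsum_scalr.
rewrite (_ : Rsum (pA0 P) = pL0 P) ?Rinv_r //; first by have := pL0_pos; lra.
by rewrite /pA0 /pL0 /pX0 (Rsum_exch (fun x a => P false x a)).
Qed.

Lemma P0_factor x a : 0 < pX P x -> P false x a = pX0 P x * pAcond a.
Proof.
move=> pX_pos; have pX0x := pX0_pos pX_pos.
by rewrite /pAcond -(indep0 a pX0x); field; lra.
Qed.

Lemma suspX_finite :
  suspX P = Fin (Rsum (fun x => pX P x * - log2 (pX0 P x / pX P x))).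
Proof. exact: susp_fin pX_ge0 pX0_pos. Qed.

Lemma suspXA_finite : full_support ->
  suspXA P = Fin (Rsum (fun xa : X * A =>
    pXA P xa.1 xa.2 * - log2 (P false xa.1 xa.2 / pXA P xa.1 xa.2))).
Proof. by move=> full; apply: susp_fin => [[x a]|[x a]] /=; [exact: pXA_ge0 | exact: full]. Qed.

Lemma suspXA_infinite : ~ full_support -> suspXA P = PInf.
Proof.
move=> not_full.
have [x [a [pXA_pos P0_npos]]] :
    exists x a, 0 < pXA P x a /\ ~ 0 < P false x a.
  apply: NNPP => none; apply: not_full => x a pXA_pos; apply: NNPP => P0_npos.
  by apply: none; exists x, a.
apply: (@susp_inf _ _ _ (x, a)) => //=.
by rewrite /pXA0; have := P_ge0 false x a; lra.
Qed.

Lemma mutinfo_sum : mutinfo P = Rsum (fun xa : X * A =>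
  pXA P xa.1 xa.2 * log2 (pXA P xa.1 xa.2 / (pX P xa.1 * pA P xa.2))).
Proof.
apply: Rsum_ext => [[x a]] /=; case: Rlt_dec => [//|/= pXA_npos].
by rewrite (_ : pXA P x a = 0) ?Rmult_0_l //; have := pXA_ge0 x a; lra.
Qed.

Lemma sum_pairs_X (f : X -> R) :
  Rsum (fun xa : X * A => pXA P xa.1 xa.2 * f xa.1) = Rsum (fun x => pX P x * f x).
Proof. by rewrite (Rsum_pair (fun x a => pXA P x a * f x)); apply: Rsum_ext => x; rewrite Rsum_scalr. Qed.

Lemma sum_pairs_A (g : A -> R) :
  Rsum (fun xa : X * A => pXA P xa.1 xa.2 * g xa.2) = Rsum (fun a => pA P a * g a).
Proof.
rewrite (Rsum_pair (fun x a => pXA P x a * g a)) Rsum_exch.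
by apply: Rsum_ext => a; rewrite Rsum_scalr.
Qed.

Lemma pAcond_supp : full_support -> forall a, 0 < pA P a -> 0 < pAcond a.
Proof.
move=> full a pA_pos; apply: Rdiv_lt_0_compat pL0_pos.
have [x pXA_pos] := Rsum_pos_term (pXA_ge0^~ a) pA_pos.
by have := full x a pXA_pos; have := P0_le_pA0 x a; lra.
Qed.

Lemma chain_term x a : full_support ->
  pXA P x a * - log2 (P false x a / pXA P x a) =
  pXA P x a * - log2 (pX0 P x / pX P x)
  + pXA P x a * log2 (pXA P x a / (pX P x * pA P a))
  + pXA P x a * log2 (pA P a / pAcond a).
Proof.
move=> full; case: (Req_dec (pXA P x a) 0) => [->|pXA_neq0]; first ring.
have pXA_pos : 0 < pXA P x a by have := pXA_ge0 x a; lra.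
have pX_pos : 0 < pX P x by have := pXA_le_pX x a; lra.
have pA_pos : 0 < pA P a by have := pXA_le_pA x a; lra.
have pX0_pos' := pX0_pos pX_pos.
have pAcond_pos := pAcond_supp full pA_pos.
have pXpA_pos := Rmult_lt_0_compat _ _ pX_pos pA_pos.
rewrite P0_factor //; move: (pAcond a) pAcond_pos => c c_pos.
rewrite !log2_div ?log2_mul //; first ring.
exact: Rmult_lt_0_compat.
Qed.

Lemma excess_suspicion : full_support ->
  esub (suspXA P) (suspX P) = Fin (mutinfo P + divergence (pA P) pAcond).
Proof.
move=> full; rewrite suspXA_finite // suspX_finite /= mutinfo_sum /divergence.
rewrite -sum_pairs_X -(sum_pairs_A (fun a => log2 (pA P a / pAcond a))).
rewrite (Rsum_ext (fun xa => chain_term xa.1 xa.2 full)) !Rsum_add; congr Fin.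
(* unfolding lets [ring] identify sums indexed by the same product type *)
by rewrite /Rsum /=; ring.
Qed.

Lemma pAcond_ge0 a : 0 <= pAcond a.
Proof.
apply: Rmult_le_pos; first exact: Rsum_ge0 (P_ge0 false^~ a).
by apply/Rlt_le/Rinv_0_lt_compat/pL0_pos.
Qed.

Lemma marginal_divergence_ge0 : full_support -> 0 <= divergence (pA P) pAcond.
Proof.
move=> full; apply: divergence_ge0 pA_ge0 pAcond_ge0 _ (pAcond_supp full).
by rewrite pA_total pAcond_total.
Qed.

Lemma marginal_divergence_eq0 : full_support ->
  divergence (pA P) pAcond = 0 <-> forall a, pA P a = pAcond a.
Proof.
move=> full; apply: divergence_eq0 pA_ge0 pAcond_ge0 _ (pAcond_supp full).
by rewrite pA_total pAcond_total.
Qed.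

Lemma full_support_of_ratio :
  (forall x a, 0 < pXA P x a -> 0 < pXA0 P x a / pXA P x a) -> full_support.
Proof.
move=> ratio_pos x a pXA_pos.
have -> : P false x a = pXA0 P x a / pXA P x a * pXA P x a by rewrite /pXA0; field; lra.
exact: Rmult_lt_0_compat (ratio_pos x a pXA_pos) pXA_pos.
Qed.
End JointDistribution.

Theorem theorem3p1 (X A : finType) (P : bool -> X -> A -> R)
  (Pnn : forall l x a, 0 <= P l x a)
  (Psum : Rsum (fun l : bool => Rsum (fun x : X => Rsum (fun a : A => P l x a))) = 1)
  (* conditioned on L = 0, A is independent of X *)
  (Hind : forall (x : X) (a : A), 0 < pX0 P x ->
     P false x a / pX0 P x = pA0 P a / pL0 P)
  (* Pr(L = 0 | X = x) > 0 on the support of X *)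
  (HposX : forall x : X, 0 < pX P x -> 0 < pX0 P x / pX P x) :
  ele (Fin (mutinfo P)) (esub (suspXA P) (suspX P)) /\
  ((forall (x : X) (a : A), 0 < pXA P x a -> 0 < pXA0 P x a / pXA P x a) ->
   (esub (suspXA P) (suspX P) = Fin (mutinfo P) <->
    forall a : A, pA P a = pA0 P a / pL0 P)).
Proof.
split.
- case: (classic (full_support P)) => [full | not_full].
  + rewrite (excess_suspicion Pnn Psum Hind HposX full) /=.
    by have := marginal_divergence_ge0 Pnn Psum HposX full; lra.
  + by rewrite (suspXA_infinite Pnn not_full) (suspX_finite Pnn HposX).
- move=> ratio_pos; have full := full_support_of_ratio ratio_pos.
  rewrite (excess_suspicion Pnn Psum Hind HposX full).
  apply: iff_trans (marginal_divergence_eq0 Pnn Psum HposX full).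
  split => [[excess] | div0]; first lra.
  by rewrite div0 Rplus_0_r.
Qed.
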